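(* For every positive integer $\ell$ there exists a (finite) squaregraph $G$ such that for every graph $H$ and every path $P$, if $G$ is isomorphic to a subgraph of $H\boxtimes P\boxtimes K_\ell$, then $H$ contains a cycle of length at most $6$.
   Context: A squaregraph is a plane graph in which every bounded face is bounded by a $4$-cycle and every vertex not on the outer face has degree at least $4$. $K_\ell$ is the complete graph on $\ell$ vertices. The strong product $G\boxtimes H$ has vertex set $V(G)\times V(H)$ with $(v,w)\sim(v',w')$ if ($v=v'$ and $ww'\in E(H)$) or ($w=w'$ and $vv'\in E(G)$) or ($vv'\in E(G)$ and $ww'\in E(H)$). *)

From mathcomp Require Import all_boot.

Set Implicit Arguments.
Unset Strict Implicit.
Unset Printing Implicit Defensive.

Definition simple_graph (T : finType) (e : rel T) : Prop :=
  symmetric e /\ irreflexive e.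

Definition strong_prod (A B : finType) (eA : rel A) (eB : rel B) : rel (A * B) :=
  fun x y => [|| (x.1 == y.1) && eB x.2 y.2,
                 (x.2 == y.2) && eA x.1 y.1
               | eA x.1 y.1 && eB x.2 y.2].

Definition path_graph (n : nat) : rel 'I_n :=
  fun i j => (i.+1 == j :> nat) || (j.+1 == i :> nat).

Arguments path_graph n : clear implicits.

Definition complete_graph (l : nat) : rel 'I_l := fun i j => i != j.

Arguments complete_graph l : clear implicits.

Definition subgraph_iso (VG W : finType) (eG : rel VG) (eW : rel W) : Prop :=
  exists f : VG -> W, injective f /\ (forall u v, eG u v -> eW (f u) (f v)).

Definition has_cycle_le (T : finType) (e : rel T) (k : nat) : Prop :=
  exists s : seq T, [/\ 3 <= size s <= k, uniq s & cycle e s].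

(* rot v is a cyclic permutation of the neighbourhood of v
   (the clockwise order of the edges around v in the embedding). *)
Definition rotation_system (V : finType) (e : rel V) (rot : V -> V -> V) : Prop :=
  forall v,
    [/\ (forall u, e v u -> e v (rot v u)),
        (forall u w, e v u -> e v w -> rot v u = rot v w -> u = w)
      & (forall u w, e v u -> e v w -> exists k, iter k (rot v) u = w)].

Definition darts (V : finType) (e : rel V) : {set V * V} :=
  [set d : V * V | e d.1 d.2].

(* face tracing permutation on darts *)
Definition face_step (V : finType) (rot : V -> V -> V) (d : V * V) : V * V :=
  (d.2, rot d.2 d.1).

Definition face_of (V : finType) (rot : V -> V -> V) (d : V * V) : {set V * V} :=
  [set d' | fconnect (face_step rot) d d'].

(* the set of faces (each face = its set of boundary darts) *)
Definition faces (V : finType) (e : rel V) (rot : V -> V -> V) : {set {set V * V}} :=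
  [set face_of rot d | d in darts e].

Definition face_vertices (V : finType) (f : {set V * V}) : {set V} :=
  [set d.1 | d in f].

Definition connected_graph (V : finType) (e : rel V) : Prop :=
  forall u v, connect e u v.

(* Euler's formula |V| - |E| + |F| = 2, i.e. the rotation system is a
   genus-0 (plane) embedding of the connected graph; |darts| = 2|E|. *)
Definition genus0 (V : finType) (e : rel V) (rot : V -> V -> V) : Prop :=
  (2 * #|V| + 2 * #|faces e rot| = #|darts e| + 4)%N.

Definition squaregraph (V : finType) (e : rel V) : Prop :=
  simple_graph e /\
  exists (rot : V -> V -> V) (o : {set V * V}),
    [/\ rotation_system e rot /\ connected_graph e,
        genus0 e rot,
        o \in faces e rot,
        (forall f, f \in faces e rot -> f != o ->
            #|f| = 4 /\ #|face_vertices f| = 4)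
      & (forall v, v \notin face_vertices o -> 4 <= #|[set u | e v u]|)].

From mathcomp Require Import all_boot zify.
From Stdlib Require Import Classical.

Set Implicit Arguments.
Unset Strict Implicit.
Unset Printing Implicit Defensive.

(* The witness is the gear graph with d = 40 l^2 spokes (a wheel whose rim edges
   are subdivided), drawn with its rim on a circle: a squaregraph whose bounded
   faces are the quadrilaterals hub, rim i, tooth i, rim (i+1).
   Suppose it embeds in H x P x K_l with H of girth at least 7, and let x be the
   H-coordinate of the hub.  Every rim vertex projects to x or to a neighbour of
   x.  If two consecutive rim vertices project to distinct neighbours of x, the
   tooth between them, which is equal or adjacent to both, must project to x:
   otherwise H has a cycle of length 3 or 4.  Rim vertices lie within P-distance
   1 of the hub and teeth within distance 2, so at most 3 l rim vertices and 5 l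
   teeth project to any single vertex of H.  Hence the H-projection of the rim
   changes at most 11 l times around the wheel, takes at most 11 l + 1 values,
   and takes each value at most 3 l times: d <= (11 l + 1) 3 l < 40 l^2. *)

Section CyclicOrdinals.
Variable d : nat.
Implicit Types i j : 'I_d.

Lemma iter_ordS_val i k : val (iter k (@ordS d) i) = (i + k) %% d.
Proof.
elim: k => [|k IHk] /=; first by rewrite addn0 modn_small.
by rewrite IHk -addn1 modnDml addn1 addnS.
Qed.

Lemma iter_ord_pred_onto i j : exists k, iter k (@ord_pred d) i = j.
Proof.
have [k ->] : exists k, i = iter k (@ordS d) j.
  exists (i + d - j); apply: val_inj; rewrite iter_ordS_val.
  have -> : j + (i + d - j) = i + d by have := ltn_ord j; lia.
  by rewrite modnDr modn_small.
by exists k; elim: k j => // k IHk j; rewrite [iter k.+1 (@ordS d) _]iterS iterSr ordSK.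
Qed.

Lemma eq_ordS_pred i j : (ordS i == j) = (i == ord_pred j).
Proof. by apply/eqP/eqP => [<-|->]; rewrite ?ordSK ?ord_predK. Qed.

Hypothesis d_gt1 : 1 < d.

Lemma ordS_neq i : ordS i != i.
Proof.
apply/eqP => /(congr1 val) /=; have := ltn_ord i.
case: (ltnP i.+1 d) => [lt_id _|le_di lt_id]; first by rewrite modn_small //; lia.
have -> : i.+1 = d by lia.
by rewrite modnn; lia.
Qed.

Lemma ord_pred_neq i : ord_pred i != i.
Proof. by apply/eqP => E; have := ordS_neq (ord_pred i); rewrite ord_predK E eqxx. Qed.

End CyclicOrdinals.

Lemma card_nbrs (V : finType) (e : rel V) v (s : seq V) :
  (forall u, e v u = (u \in s)) -> uniq s -> #|[set u | e v u]| = size s.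
Proof. by move=> es /card_uniqP <-; apply: eq_card => u; rewrite inE es. Qed.

Lemma card_darts (V : finType) (e : rel V) :
  #|darts e| = \sum_v #|[set u | e v u]|.
Proof.
rewrite /darts -sum1dep_card.
under [RHS]eq_bigr => v _ do rewrite -sum1dep_card.
by rewrite pair_big_dep.
Qed.

Lemma sum_option (T : finType) (F : option T -> nat) :
  \sum_v F v = F None + \sum_x F (Some x).
Proof.
rewrite (bigD1 None) //=; apply: congr1.
rewrite (reindex_omap Some id) //; last by case.
by apply: eq_bigl => x; rewrite eqxx.
Qed.

Lemma fcycle_rotation (V : finType) (e : rel V) (r : V -> V) v (s : seq V) :
  fcycle r s -> (forall u, e v u = (u \in s)) ->
  [/\ forall u, e v u -> e v (r u),
      forall u w, e v u -> e v w -> r u = r w -> u = w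
    & forall u w, e v u -> e v w -> exists k, iter k r u = w].
Proof.
move=> cs es; split=> [u|u w|u w]; rewrite !es.
- exact: mem_fcycle.
- exact: inj_cycle.
- by move=> us ws; exists (findex r u w); rewrite iter_findex // (fconnect_cycle cs us).
Qed.

Lemma face_of_fcycle (V : finType) (rot : V -> V -> V) (s : seq (V * V)) x :
  fcycle (face_step rot) s -> x \in s -> face_of rot x = [set y in s].
Proof. by move=> cs xs; apply/setP => y; rewrite !inE (fconnect_cycle cs xs). Qed.

Lemma face_ofE (V : finType) (rot : V -> V -> V) (S : {set V * V}) x :
  x \in S -> {homo face_step rot : y / y \in S} ->
  {in S, forall y, fconnect (face_step rot) x y} -> face_of rot x = S.
Proof.
move=> xS closedS reachS; apply/setP => y; rewrite inE.
apply/idP/idP => [/iter_findex <-|/reachS //].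
by elim: (findex _ x y) => //= k; apply: closedS.
Qed.

Lemma card_face_vertices (V : finType) (s : seq (V * V)) :
  uniq (map fst s) -> #|face_vertices [set x in s]| = size s.
Proof.
move=> /card_uniqP; rewrite size_map => <-; apply: eq_card => v.
by rewrite /face_vertices; apply/imsetP/mapP => -[x xs ->]; exists x; rewrite ?inE in xs *.
Qed.

(* The gear graph: the wheel with hub [None] and rim vertices [rim i], whose rim
   edge between [rim i] and [rim (ordS i)] is subdivided by [tooth i]. *)
Definition gear_vertex (d : nat) := option ('I_d * bool).
Local Notation hub := None.
Definition rim d (i : 'I_d) : gear_vertex d := Some (i, false).
Definition tooth d (i : 'I_d) : gear_vertex d := Some (i, true).

Variant gear_vertex_spec d : gear_vertex d -> Type :=
  | GearHub : gear_vertex_spec hub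
  | GearRim i : gear_vertex_spec (rim i)
  | GearTooth i : gear_vertex_spec (tooth i).

Lemma gear_vertexP d (v : gear_vertex d) : gear_vertex_spec v.
Proof. by case: v => [[i []]|]; constructor. Qed.

Definition gear_edge d (u v : gear_vertex d) : bool :=
  match u, v with
  | hub, Some (_, false) | Some (_, false), hub => true
  | Some (i, false), Some (j, true) | Some (j, true), Some (i, false) =>
      (j == i) || (ordS j == i)
  | _, _ => false
  end.

(* The rotation system of the drawing with the rim on a circle around the hub. *)
Definition gear_rot d (v u : gear_vertex d) : gear_vertex d :=
  match v with
  | hub => if u is Some (i, false) then rim (ord_pred i) else u
  | Some (j, false) =>
      if u == hub then tooth j else if u == tooth j then tooth (ord_pred j)
      else if u == tooth (ord_pred j) then hub else u
  | Some (j, true) =>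
      if u == rim j then rim (ordS j) else if u == rim (ordS j) then rim j else u
  end.
Arguments gear_rot : simpl never.

Lemma gear_simple d : simple_graph (@gear_edge d).
Proof. by split=> [[[i []]|] [[j []]|]|[[i []]|]]. Qed.

Lemma gear_edge_rim_tooth d (i : 'I_d) : gear_edge (rim i) (tooth i).
Proof. by rewrite /= eqxx. Qed.

Lemma gear_edge_rimS_tooth d (i : 'I_d) : gear_edge (rim (ordS i)) (tooth i).
Proof. by rewrite /= eqxx orbT. Qed.

Lemma rim_inj d : injective (@rim d). Proof. by move=> i j []. Qed.
Lemma tooth_inj d : injective (@tooth d). Proof. by move=> i j []. Qed.

Section Gear.
Variable d : nat.
Implicit Types i j : 'I_d.

Lemma gear_edge_hub v : gear_edge hub v = (v \in [set rim i | i : 'I_d]).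
Proof.
case: v => [[i []]|] /=; apply/esym/imsetP; [by case | by exists i | by case].
Qed.

Lemma gear_edge_rim j v :
  gear_edge (rim j) v = (v \in [:: hub; tooth j; tooth (ord_pred j)]).
Proof.
case: v => [[i []]|] //;
  by rewrite /= !inE !(inj_eq Some_inj) !xpair_eqE ?andbT ?andbF ?eq_ordS_pred.
Qed.

Lemma gear_edge_tooth j v : gear_edge (tooth j) v = (v \in [:: rim j; rim (ordS j)]).
Proof.
case: v => [[i []]|] //;
  by rewrite /= !inE !(inj_eq Some_inj) !xpair_eqE ?andbT ?andbF ?(eq_sym i).
Qed.

Lemma gear_rot_hub i : gear_rot hub (rim i) = rim (ord_pred i).
Proof. by []. Qed.

Lemma iter_gear_rot_hub k i : iter k (gear_rot hub) (rim i) = rim (iter k (@ord_pred d) i).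
Proof. by elim: k => //= k ->. Qed.

Lemma gear_rot_tooth j : gear_rot (tooth j) (rim j) = rim (ordS j).
Proof. by rewrite /gear_rot /= eqxx. Qed.

Lemma gear_rot_rim_hub j : gear_rot (rim j) hub = tooth j.
Proof. by []. Qed.

Lemma gear_rot_rim_tooth j : gear_rot (rim j) (tooth j) = tooth (ord_pred j).
Proof. by rewrite /gear_rot /= eqxx. Qed.

Hypothesis d_gt1 : 1 < d.

Lemma gear_rot_toothS j : gear_rot (tooth j) (rim (ordS j)) = rim j.
Proof. by rewrite /gear_rot /= (inj_eq (@rim_inj d)) (negbTE (ordS_neq d_gt1 j)) eqxx. Qed.

Lemma gear_rot_rim_tooth_pred j : gear_rot (rim j) (tooth (ord_pred j)) = hub.
Proof.
by rewrite /gear_rot /= (inj_eq (@tooth_inj d)) (negbTE (ord_pred_neq d_gt1 j)) eqxx.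
Qed.

Lemma gear_rotation_system : rotation_system (@gear_edge d) (@gear_rot d).
Proof.
case=> [[j []]|].
- apply: (fcycle_rotation (s := [:: rim j; rim (ordS j)])) (gear_edge_tooth j).
  by rewrite /= gear_rot_tooth gear_rot_toothS !eqxx.
- apply: (fcycle_rotation (s := [:: hub; tooth j; tooth (ord_pred j)])) (gear_edge_rim j).
  by rewrite /= gear_rot_rim_hub gear_rot_rim_tooth gear_rot_rim_tooth_pred !eqxx.
- split=> [[[i []]|] | [[i []]|] [[i' []]|] | [[i []]|] [[i' []]|]] //.
  + by move=> _ _; rewrite !gear_rot_hub => /(@rim_inj d) /(@ord_pred_inj d) ->.
  + have [k <-] := iter_ord_pred_onto i i'.
    by exists k; rewrite iter_gear_rot_hub.
Qed.

Lemma gear_connected : connected_graph (@gear_edge d).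
Proof.
have to_hub v : connect (@gear_edge d) v hub.
  case: v => [[i []]|]; last exact: connect0.
  - apply: (@connect_trans _ _ (rim i)); apply: connect1;
      by rewrite ?gear_edge_tooth ?mem_head.
  - exact: connect1.
move=> u v; apply: connect_trans (to_hub u) _.
by rewrite (sym_connect_sym (proj1 (gear_simple d))).
Qed.

Local Notation step := (face_step (@gear_rot d)).

Definition quad_darts j : seq (gear_vertex d * gear_vertex d) :=
  [:: (hub, rim j); (rim j, tooth j); (tooth j, rim (ordS j)); (rim (ordS j), hub)].

Definition quad j := [set x in quad_darts j].

Definition outer : {set gear_vertex d * gear_vertex d} :=
  [set (tooth i, rim i) | i in 'I_d] :|: [set (rim i, tooth (ord_pred i)) | i in 'I_d].

Lemma outer_tooth i : (tooth i, rim i) \in outer.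
Proof. by rewrite inE imset_f. Qed.

Lemma outer_rim i : (rim i, tooth (ord_pred i)) \in outer.
Proof. by rewrite inE orbC imset_f. Qed.

Lemma outerP x :
  x \in outer -> exists i, x = (tooth i, rim i) \/ x = (rim i, tooth (ord_pred i)).
Proof. by rewrite inE => /orP[] /imsetP[i _ ->]; exists i; [left|right]. Qed.

Lemma step_outer_tooth i : step (tooth i, rim i) = (rim i, tooth (ord_pred i)).
Proof. by rewrite /face_step /= gear_rot_rim_tooth. Qed.

Lemma step_outer_rim i :
  step (rim i, tooth (ord_pred i)) = (tooth (ord_pred i), rim (ord_pred i)).
Proof. by have := gear_rot_toothS (ord_pred i); rewrite ord_predK /face_step /= => ->. Qed.

Lemma fcycle_quad j : fcycle step (quad_darts j).
Proof.
have rot_toothS : gear_rot (rim (ordS j)) (tooth j) = hub.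
  by have := gear_rot_rim_tooth_pred (ordS j); rewrite ordSK.
rewrite /= /face_step /= gear_rot_rim_hub gear_rot_tooth rot_toothS gear_rot_hub.
by rewrite ordSK !eqxx.
Qed.

Lemma face_of_quad j x : x \in quad j -> face_of (@gear_rot d) x = quad j.
Proof. by rewrite inE; apply: face_of_fcycle (fcycle_quad j). Qed.

Lemma face_of_outer x : x \in outer -> face_of (@gear_rot d) x = outer.
Proof.
have tooth_to_tooth i j : fconnect step (tooth i, rim i) (tooth j, rim j).
  have [k <-] := iter_ord_pred_onto i j; elim: k => [|k IHk]; first exact: connect0.
  apply: connect_trans IHk _; rewrite iterS; set m := iter k _ i.
  apply: (@connect_trans _ _ (step (tooth m, rim m))); apply: connect1;
    by rewrite /= ?step_outer_tooth ?step_outer_rim.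
move=> x_outer; apply: face_ofE => // [y|y y_outer].
  case/outerP=> i [] ->; rewrite ?step_outer_tooth ?step_outer_rim.
    exact: outer_rim.
  exact: outer_tooth.
have [i x_tooth] : exists i, fconnect step x (tooth i, rim i).
  case/outerP: x_outer => i [] ->; first by exists i; apply: connect0.
  by exists (ord_pred i); apply: connect1; rewrite /= step_outer_rim.
have [j tooth_y] : exists j, fconnect step (tooth j, rim j) y.
  case/outerP: y_outer => j [] ->; first by exists j; apply: connect0.
  by exists j; apply: connect1; rewrite /= step_outer_tooth.
exact: connect_trans x_tooth (connect_trans (tooth_to_tooth i j) tooth_y).
Qed.

Lemma gear_dartP x : x \in darts (@gear_edge d) -> (exists j, x \in quad j) \/ x \in outer.
Proof.
case: x => u v; rewrite [_ \in darts _]inE /=; case: u / gear_vertexP => [|j|j].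
- by rewrite gear_edge_hub => /imsetP[i _ ->]; left; exists i; rewrite !inE eqxx.
- rewrite gear_edge_rim => /[!(in_cons, in_nil, orbF)] /or3P[] /eqP ->.
  + by left; exists (ord_pred j); rewrite !inE ord_predK eqxx !orbT.
  + by left; exists j; rewrite !inE eqxx !orbT.
  + by right; exact: outer_rim.
- rewrite gear_edge_tooth => /[!(in_cons, in_nil, orbF)] /orP[] /eqP ->.
  + by right; exact: outer_tooth.
  + by left; exists j; rewrite !inE eqxx !orbT.
Qed.

Definition gear_face (o : option 'I_d) := if o is Some j then quad j else outer.

Lemma gear_faces : faces (@gear_edge d) (@gear_rot d) = gear_face @: setT.
Proof.
apply/setP => F; apply/imsetP/imsetP => [[x x_dart ->]|[[j|] _ ->]].
- case: (gear_dartP x_dart) => [[j x_quad]|x_outer].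
  + by exists (Some j); rewrite ?in_setT ?(face_of_quad x_quad).
  + by exists None; rewrite ?in_setT ?(face_of_outer x_outer).
- exists (hub, rim j); first by rewrite inE.
  by rewrite (@face_of_quad j) // inE mem_head.
- have i : 'I_d by exists 0; apply: ltnW.
  exists (tooth i, rim i); first by rewrite inE gear_edge_tooth mem_head.
  by rewrite face_of_outer ?outer_tooth.
Qed.

Lemma hub_dart_quad i j : ((hub, rim i) \in quad j) = (i == j).
Proof. by rewrite !inE !xpair_eqE /= orbF (inj_eq (@rim_inj d)). Qed.

Lemma hub_dart_outer i : (hub, rim i) \notin outer.
Proof. by apply/negP => /outerP[j [] []]. Qed.

Lemma gear_face_inj : injective gear_face.
Proof.
case=> [i|] [j|] //= eq_face.
- by have := hub_dart_quad i j; rewrite -eq_face hub_dart_quad eqxx => /esym/eqP ->.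
- by have := hub_dart_outer i; rewrite -eq_face hub_dart_quad eqxx.
- by have := hub_dart_outer j; rewrite eq_face hub_dart_quad eqxx.
Qed.

Lemma card_gear_faces : #|faces (@gear_edge d) (@gear_rot d)| = d.+1.
Proof.
by rewrite gear_faces card_imset ?cardsT ?card_option ?card_ord //; exact: gear_face_inj.
Qed.

Lemma gear_degree_hub : #|[set u | @gear_edge d hub u]| = d.
Proof.
have -> : [set u | @gear_edge d hub u] = [set rim i | i : 'I_d].
  by apply/setP => v; rewrite inE gear_edge_hub.
by rewrite card_imset ?card_ord //; exact: rim_inj.
Qed.

Lemma gear_degree_rim j : #|[set u | gear_edge (rim j) u]| = 3.
Proof.
rewrite (card_nbrs (gear_edge_rim j)) //= !inE (inj_eq (@tooth_inj d)).
by rewrite eq_sym (ord_pred_neq d_gt1).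
Qed.

Lemma gear_degree_tooth j : #|[set u | gear_edge (tooth j) u]| = 2.
Proof.
rewrite (card_nbrs (gear_edge_tooth j)) //= !inE (inj_eq (@rim_inj d)).
by rewrite eq_sym (ordS_neq d_gt1).
Qed.

Lemma card_gear_darts : #|darts (@gear_edge d)| = 6 * d.
Proof.
rewrite card_darts sum_option gear_degree_hub.
have -> : \sum_(x : 'I_d * bool) #|[set u | gear_edge (Some x) u]| =
          \sum_(i < d) \sum_(b : bool) #|[set u | gear_edge (Some (i, b)) u]|.
  by rewrite pair_bigA; apply: eq_bigr => -[].
under eq_bigr => i _ do rewrite big_bool gear_degree_tooth gear_degree_rim.
by rewrite sum_nat_const card_ord /=; lia.
Qed.

Lemma uniq_quad_vertices j : uniq (map fst (quad_darts j)).
Proof.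
rewrite /= !inE !(inj_eq Some_inj) !xpair_eqE /= !andbF !andbT /=.
by rewrite eq_sym (ordS_neq d_gt1).
Qed.

Lemma card_quad j : #|quad j| = 4.
Proof. by rewrite cardsE; apply/card_uniqP/(map_uniq (uniq_quad_vertices j)). Qed.

End Gear.

Lemma gear_squaregraph d : 3 < d -> squaregraph (@gear_edge d).
Proof.
move=> d_gt3; have d_gt1 : 1 < d by apply: ltn_trans d_gt3.
split; first exact: gear_simple.
exists (@gear_rot d), (outer d); split.
- by split; [exact: gear_rotation_system | exact: gear_connected].
- rewrite /genus0 card_gear_faces // card_gear_darts //.
  by rewrite card_option card_prod card_ord card_bool; lia.
- by rewrite gear_faces //; apply/imsetP; exists None.
- move=> F; rewrite gear_faces // => /imsetP[[j|] _ ->] /=; last by rewrite eqxx.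
  by rewrite card_quad // card_face_vertices // uniq_quad_vertices.
- move=> v; case: v / gear_vertexP => [|i|i] v_inner; first by rewrite gear_degree_hub.
  + case/negP: v_inner; apply/imsetP; exists (rim i, tooth (ord_pred i)) => //.
    exact: outer_rim.
  + case/negP: v_inner; apply/imsetP; exists (tooth i, rim i) => //.
    exact: outer_tooth.
Qed.

Lemma card_le_image_fibres (I Y : finType) (c : I -> Y) m :
  (forall y, #|[set i | c i == y]| <= m) -> #|I| <= #|c @: I| * m.
Proof.
move=> fibre; rewrite -[#|I|]sum1_card (partition_big_imset c) -sum_nat_const.
by apply: leq_sum => y _; rewrite (eq_bigl (fun i => c i == y)) // sum1dep_card.
Qed.

Lemma card_imset_le_changes d (Y : finType) (c : 'I_d -> Y) :
  #|c @: 'I_d| <= #|[set i | c i != c (ordS i)]| + 1.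
Proof.
case: d c => [|d] c; first by apply: leq_trans (leq_imset_card _ _) _; rewrite card_ord.
set changes := [set i | _].
have sub : c @: 'I_d.+1 \subset c @: (changes :|: [set ord_max]).
  apply/subsetP => _ /imsetP[i _ ->].
  (* the last occurrence of the value [c i] is a change or [ord_max] *)
  case: (@arg_maxnP _ i (fun j => c j == c i) val) => // j /eqP cj max_j.
  apply/imsetP; exists j => //; rewrite !inE.
  case: (eqVneq j ord_max) => [_|j_max]; rewrite ?orbT ?orbF //.
  have val_jS : val (ordS j) = j.+1.
    rewrite /= modn_small // ltnS ltn_neqAle -ltnS ltn_ord andbT.
    by rewrite -(inj_eq val_inj) in j_max.
  apply/negP => /eqP cjS; have := max_j (ordS j); rewrite -cjS cj eqxx val_jS.
  by move=> /(_ isT) /=; rewrite ltnn.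
apply: leq_trans (subset_leq_card sub) _; apply: leq_trans (leq_imset_card _ _) _.
by apply: leq_trans (leq_card_setU _ _) _; rewrite cards1.
Qed.

Lemma strong_prod_proj (A B : finType) (eA : rel A) (eB : rel B) x y :
  (x == y) || strong_prod eA eB x y ->
  ((x.1 == y.1) || eA x.1 y.1) && ((x.2 == y.2) || eB x.2 y.2).
Proof. by case/orP => [/eqP ->|/or3P[] /andP[-> ->]]; rewrite ?eqxx ?orbT. Qed.

Lemma path_graph_close n (i j : 'I_n) :
  (i == j) || path_graph n i j -> (i <= j + 1) && (j <= i + 1).
Proof. by case/orP => [/eqP ->|/orP[] /eqP <-]; apply/andP; split; lia. Qed.

Lemma card_window (I VH : finType) n l (A : {pred I}) (g : I -> (VH * 'I_n) * 'I_l)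
    (y : VH) (p r : nat) :
  {in A &, injective g} ->
  {in A, forall i, [/\ (g i).1.1 = y, p <= (g i).1.2 + r & (g i).1.2 <= p + r]} ->
  #|A| <= (2 * r).+1 * l.
Proof.
move=> g_inj g_win.
pose h i : 'I_(2 * r).+1 * 'I_l := (inord ((g i).1.2 + r - p), (g i).2).
suff /leq_card_in : {in A &, injective h} by rewrite card_prod !card_ord.
move=> i j iA jA [/(congr1 (@nat_of_ord _))]; have [yi lo_i hi_i] := g_win i iA.
have [yj lo_j hi_j] := g_win j jA; rewrite !inordK; try lia.
move=> eq_p eq_k; apply: g_inj => //; move: yi yj eq_k.
have {eq_p} : (g i).1.2 = (g j).1.2 by apply: ord_inj; lia.
by case: (g i) (g j) => [[a b] c] [[a' b'] c'] /= -> -> -> ->.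
Qed.

Section ShortCycles.
Variables (T : finType) (e : rel T).
Hypothesis e_simple : simple_graph e.

Lemma edge_neq x y : e x y -> x != y.
Proof. by apply: contraTneq => ->; rewrite (proj2 e_simple). Qed.

Lemma triangle_has_cycle_le k x y z :
  3 <= k -> e x y -> e y z -> e z x -> has_cycle_le e k.
Proof.
move=> k_ge3 xy yz zx; exists [:: x; y; z]; split; rewrite /= ?xy ?yz ?zx //.
by rewrite !inE negb_or (edge_neq xy) (edge_neq yz) eq_sym (edge_neq zx).
Qed.

Lemma square_has_cycle_le k x y z w :
  4 <= k -> e x y -> e y z -> e z w -> e w x -> x != z -> y != w -> has_cycle_le e k.
Proof.
move=> k_ge4 xy yz zw wx xz yw; exists [:: x; y; z; w].
split; rewrite /= ?xy ?yz ?zw ?wx //.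
by rewrite !inE !negb_or (edge_neq xy) xz (edge_neq yz) yw (edge_neq zw) eq_sym
  (edge_neq wx).
Qed.

Lemma common_nbr_eq k x a b z :
  4 <= k -> ~ has_cycle_le e k -> e x a -> e x b -> a != b ->
  (a == z) || e a z -> (b == z) || e b z -> z = x.
Proof.
move=> k_ge4 girth xa xb ab az bz; have e_sym := proj1 e_simple.
case: (eqVneq z x) => // zx; case: girth.
have k_ge3 : 3 <= k by apply: ltnW.
case/orP: az => [/eqP az|az].
  move: bz; rewrite -az eq_sym (negbTE ab) /= => ba.
  by apply: (@triangle_has_cycle_le k x a b k_ge3 xa); rewrite e_sym.
case/orP: bz => [/eqP bz|bz].
  rewrite -bz in az; apply: (@triangle_has_cycle_le k x a b k_ge3 xa) => //.
  by rewrite e_sym.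
by apply: (@square_has_cycle_le k x a z b k_ge4 xa az); rewrite 1?e_sym // eq_sym.
Qed.

End ShortCycles.

Section GearInStrongProduct.
Variables (d l n : nat) (VH : finType) (eH : rel VH).
Hypothesis eH_simple : simple_graph eH.
Hypothesis eH_girth : ~ has_cycle_le eH 6.
Variable f : gear_vertex d -> (VH * 'I_n) * 'I_l.
Hypothesis f_inj : injective f.
Hypothesis f_hom : forall u v, gear_edge u v ->
  strong_prod (strong_prod eH (path_graph n)) (complete_graph l) (f u) (f v).

Local Notation proj v := (f v).1.1.
Local Notation level v := (nat_of_ord (f v).1.2).

Lemma gear_edge_proj u v : gear_edge u v ->
  [/\ (proj u == proj v) || eH (proj u) (proj v), level u <= level v + 1
    & level v <= level u + 1].
Proof.
move=> /f_hom uv; have /andP[] := strong_prod_proj (introT orP (or_intror uv)).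
by case/strong_prod_proj/andP => -> /path_graph_close/andP[].
Qed.

Local Notation x0 := (proj hub).
Local Notation p0 := (level hub).

Lemma rim_level i : [/\ p0 <= level (rim i) + 1 & level (rim i) <= p0 + 1].
Proof. by case: (gear_edge_proj (isT : gear_edge hub (rim i))). Qed.

Lemma tooth_level i : [/\ p0 <= level (tooth i) + 2 & level (tooth i) <= p0 + 2].
Proof.
have [_ lo hi] := gear_edge_proj (gear_edge_rim_tooth i).
by have [] := rim_level i; split; lia.
Qed.

Lemma rim_proj i : (x0 == proj (rim i)) || eH x0 (proj (rim i)).
Proof. by case: (gear_edge_proj (isT : gear_edge hub (rim i))). Qed.

Lemma tooth_proj_hub i :
  proj (rim i) != x0 -> proj (rim (ordS i)) != x0 -> proj (rim i) != proj (rim (ordS i)) ->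
  proj (tooth i) = x0.
Proof.
have adj_hub j : proj (rim j) != x0 -> eH x0 (proj (rim j)).
  by have := rim_proj j; rewrite eq_sym => /orP[/eqP ->|]; rewrite ?eqxx.
move=> /adj_hub hub_i /adj_hub hub_iS changes_i.
have [rim_tooth _ _] := gear_edge_proj (gear_edge_rim_tooth i).
have [rimS_tooth _ _] := gear_edge_proj (gear_edge_rimS_tooth i).
exact: (common_nbr_eq eH_simple _ eH_girth hub_i hub_iS changes_i).
Qed.

Lemma card_rim_fibre y : #|[set i | proj (rim i) == y]| <= 3 * l.
Proof.
apply: (@card_window _ _ _ _ _ (fun i => f (rim i)) y p0 1).
  by move=> i j _ _ /f_inj/rim_inj.
by move=> i; rewrite inE => /eqP <-; have [] := rim_level i.
Qed.

Lemma card_rimS_at_hub : #|[set i | proj (rim (ordS i)) == x0]| <= 3 * l.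
Proof.
apply: (@card_window _ _ _ _ _ (fun i => f (rim (ordS i))) x0 p0 1).
  by move=> i j _ _ /f_inj/rim_inj/ordS_inj.
by move=> i; rewrite inE => /eqP <-; have [] := rim_level (ordS i).
Qed.

Lemma card_tooth_at_hub : #|[set i | proj (tooth i) == x0]| <= 5 * l.
Proof.
apply: (@card_window _ _ _ _ _ (fun i => f (tooth i)) x0 p0 2).
  by move=> i j _ _ /f_inj/tooth_inj.
by move=> i; rewrite inE => /eqP <-; have [] := tooth_level i.
Qed.

Lemma card_rim_changes : #|[set i | proj (rim i) != proj (rim (ordS i))]| <= 11 * l.
Proof.
set A := [set i | proj (rim i) == x0]; set AS := [set i | proj (rim (ordS i)) == x0].
set B := [set i | proj (tooth i) == x0].
have sub : [set i | proj (rim i) != proj (rim (ordS i))] \subset A :|: AS :|: B.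
  apply/subsetP => i; rewrite !inE => changes_i.
  case: (eqVneq (proj (rim i)) x0) => //= rim_i; case: eqVneq => //= rimS_i.
  by rewrite tooth_proj_hub ?eqxx.
apply: leq_trans (subset_leq_card sub) _; apply: leq_trans (leq_card_setU _ _) _.
have [card_AU _] := leq_card_setU A AS.
have := card_rim_fibre x0; have := card_rimS_at_hub; have := card_tooth_at_hub.
rewrite -/A -/AS -/B; lia.
Qed.

Lemma gear_strong_prod_bound : d <= (11 * l).+1 * (3 * l).
Proof.
rewrite -[d in d <= _]card_ord.
apply: leq_trans (card_le_image_fibres card_rim_fibre) _; rewrite leq_mul2r.
by rewrite (leq_trans (card_imset_le_changes _)) ?orbT // addn1 ltnS card_rim_changes.
Qed.

End GearInStrongProduct.

Theorem corollary12 (l : nat) (hl : 0 < l) :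
  exists (V : finType) (eG : rel V),
    squaregraph eG /\
    forall (VH : finType) (eH : rel VH) (n : nat),
      simple_graph eH ->
      subgraph_iso eG (strong_prod (strong_prod eH (path_graph n)) (complete_graph l)) ->
      has_cycle_le eH 6.
Proof.
have d_gt3 : 3 < 40 * l * l by nia.
exists (gear_vertex (40 * l * l)), (@gear_edge _); split; first exact: gear_squaregraph.
move=> VH eH n eH_simple [f [f_inj f_hom]]; apply: NNPP => eH_girth.
have := gear_strong_prod_bound eH_simple eH_girth f_inj f_hom; nia.
Qed.
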